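(* Let $T$ be a monoid, $(X,\cdot)$ an order-preserving left action of $T$ on a semilattice $X$ with identity, and $Y$ a subsemilattice of $X$ with identity satisfying: (A) for all $t\in T$ and $e,f\in Y$ with $e\le f$, $t\cdot f\in Y$ implies $t\cdot e\in Y$; (B) for all $t\in T$ there exists $g\in Y$ with $t\cdot g\in Y$. Let $H^{\mathcal{Q}}=\{te:t\in T,e\in Y,t\cdot e\in Y\}$ and $\mathcal{Q}_\ell(T,X,Y)=\langle H^{\mathcal{Q}}\rangle_{(2)}\subseteq\mathcal{P}_\ell(T,X)$. Then $\mathcal{Q}_\ell(T,X,Y)$ is a subsemigroup of $\mathcal{P}_\ell(T,X)$ closed under $+$ and $*$, is a monoid with identity $1_Y$, is a $*$-left Ehresmann monoid with semilattice of projections $Y$, and $H^{\mathcal{Q}}$ is a proper basis of $\mathcal{Q}_\ell(T,X,Y)$.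
   Context: A semilattice is a commutative semigroup of idempotents, ordered by $e\le f$ iff $ef=e$; $\langle A\rangle_{(2)}$ is the subsemigroup generated by $A$. $\mathcal{P}_\ell(T,X)$: let $T*X$ be the semigroup free product acting on $X$ (elements of $X$ act by multiplication), $\omega^+=\omega\cdot1_X$, $\sim$ the semigroup congruence generated by $\{(\alpha^+\alpha,\alpha)\}\cup\{(1_T,1_X)\}$, and $\mathcal{P}_\ell(T,X)=(T*X)/\sim$ with $[\alpha]^+=[\alpha^+]$; $X$ and $T$ are identified with their injective images $\{[x]\}$, $\{[t]\}$. It is a left Ehresmann monoid with projections $X$ and unique $T$-normal forms $t_0e_1t_1\cdots e_nt_n$ ($n\ge0$, $e_i\in X\setminus\{1\}$, $t_1,\dots,t_{n-1}\in T\setminus\{1\}$, $e_i<(t_ie_{i+1}\cdots e_nt_n)^+$); its operation $*$ is $a^*=e_n$ if $n\ge1$ and $t_n=1$, $a^*=1$ otherwise. A $*$-left Ehresmann monoid is a monoid with unary operations $+,*$ satisfying $x^+x=x$, $(x^+y^+)^+=x^+y^+$, $x^+y^+=y^+x^+$, $(xy)^+=(xy^+)^+$, $xx^*=x$, $(x^* )^*=x^*$, $x^*y^*=y^*x^*$, $(xy^* )^*y^*=(xy^* )^*$, $(x^* )^+=x^*$, $(x^+)^*=x^+$; $E=\{a^+\}=\{a^*\}$; $\sigma$ is the least monoid congruence containing $E\times E$. $H\subseteq M$ is atomic if: (H1) $E\subseteq H$; (H2) $h\in H,e\in E$ imply $he\in H$ and $(he)^*=h^*e$; (H3) if $h\in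 H$, $k\in H\setminus E$, $h^*\ge k^+$ then $hk\in H$ and $(hk)^*=k^*$; (H4) every $m$ is $\sigma$-related to some $h\in H$; (H5) if $h,k,w\in H$, $hk\,\sigma\,w$, $k^*=w^*$, then some $u\in H$ has $u\,\sigma\,h$, $u^*\ge k^+$. $H$ is proper if ($h^*=k^*$ and $h\,\sigma\,k$) iff $h=k$. $h_1\cdots h_n$ is in $H$-canonical form if $h_i^*<h_{i+1}^+$ ($1\le i<n$) and $h_i\notin E$ ($2\le i\le n$); $M$ has $H$-canonical forms if each element has exactly one such expression. A basis is an atomic generating set $H$ for which $M$ has $H$-canonical forms; a proper basis is a basis which is proper. *)

From Stdlib Require Import List ClassicalEpsilon.
Import ListNotations.
Set Implicit Arguments.

Record data := Data {
  T : Type; X : Type;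
  mulT : T -> T -> T; oneT : T;
  meet : X -> X -> X; oneX : X;
  act : T -> X -> X }.

Section Pl.
Variable D : data.

(* letters of the (semigroup) free product T*X *)
Definition letter := (T D + X D)%type.
Definition word := list letter.

Definition act_word (w : word) (x : X D) : X D :=
  fold_right (fun l acc => match l with
                           | inl t => act D t acc
                           | inr e => meet D e acc end) x w.

Definition plusw (w : word) : X D := act_word w (oneX D).

(* The congruence on words: free-product relations (making the quotient of
   words the free product T*X, with the empty word identified with 1_X),
   together with (alpha^+ alpha, alpha) and (1_T, 1_X). *)
Inductive cong : word -> word -> Prop :=
| cong_T s t : cong [inl s; inl t] [inl (mulT D s t)]
| cong_X e f : cong [inr e; inr f] [inr (meet D e f)]
| cong_plus a : cong (inr (plusw a) :: a) a
| cong_one : cong [inl (oneT D)] [inr (oneX D)]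
| cong_refl u : cong u u
| cong_sym u v : cong u v -> cong v u
| cong_trans u v w : cong u v -> cong v w -> cong u w
| cong_ctx p q u v : cong u v -> cong (p ++ u ++ q) (p ++ v ++ q).

(* Elements of P_l(T,X) are represented by their congruence classes,
   i.e. predicates on words of the form [cls w]. *)
Definition Pl := word -> Prop.
Definition cls (w : word) : Pl := fun w' => cong w w'.
Definition isClass (a : Pl) : Prop := exists w, a = cls w.

Definition mulP (a b : Pl) : Pl :=
  fun w => exists u v, a u /\ b v /\ cong w (u ++ v).
Definition plusP (a : Pl) : Pl :=
  fun w => exists u, a u /\ cong w [inr (plusw u)].

Definition injT (t : T D) : Pl := cls [inl t].
Definition injX (e : X D) : Pl := cls [inr e].

Definition leX (e f : X D) := meet D e f = e.
Definition ltX (e f : X D) := leX e f /\ e <> f.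

(* T-normal forms t0 e1 t1 ... en tn, the tail being [(e1,t1);...;(en,tn)] *)
Fixpoint nf_word (l : list (X D * T D)) : word :=
  match l with
  | [] => []
  | (e, t) :: r => inr e :: inl t :: nf_word r
  end.

Fixpoint is_nf_tail (l : list (X D * T D)) : Prop :=
  match l with
  | [] => True
  | (e, t) :: r =>
      e <> oneX D /\ (r <> [] -> t <> oneT D) /\
      ltX e (plusw (inl t :: nf_word r)) /\ is_nf_tail r
  end.

Definition star_spec (a : Pl) (e : X D) : Prop :=
  exists t0 l, is_nf_tail l /\ a = cls (inl t0 :: nf_word l) /\
    ((exists l' e', l = l' ++ [(e', oneT D)] /\ e = e') \/
     ((forall l' e', l <> l' ++ [(e', oneT D)]) /\ e = oneX D)).

(* a^* (well defined by uniqueness of T-normal forms) *)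
Definition starP (a : Pl) : Pl :=
  injX (epsilon (inhabits (oneX D)) (star_spec a)).

End Pl.

Section Gen.
Variables (M : Type) (S : M -> Prop) (mul : M -> M -> M) (one : M)
          (plus star : M -> M).

Definition closed_ops : Prop :=
  (forall a b, S a -> S b -> S (mul a b)) /\
  (forall a, S a -> S (plus a)) /\ (forall a, S a -> S (star a)).

Definition is_monoid_with_id : Prop :=
  S one /\ (forall a, S a -> mul one a = a /\ mul a one = a) /\
  (forall a b c, S a -> S b -> S c -> mul (mul a b) c = mul a (mul b c)).

Definition star_left_ehresmann_axioms : Prop :=
  forall x y, S x -> S y ->
    mul (plus x) x = x /\
    plus (mul (plus x) (plus y)) = mul (plus x) (plus y) /\
    mul (plus x) (plus y) = mul (plus y) (plus x) /\
    plus (mul x y) = plus (mul x (plus y)) /\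
    mul x (star x) = x /\
    star (star x) = star x /\
    mul (star x) (star y) = mul (star y) (star x) /\
    mul (star (mul x (star y))) (star y) = star (mul x (star y)) /\
    plus (star x) = star x /\
    star (plus x) = plus x.

Definition Eproj (e : M) : Prop := exists a, S a /\ e = plus a.

Definition E_plus_eq_star : Prop :=
  forall e, (exists a, S a /\ e = plus a) <-> (exists a, S a /\ e = star a).

Definition le (e f : M) := mul e f = e.
Definition lt (e f : M) := le e f /\ e <> f.

Inductive sigma : M -> M -> Prop :=
| sigma_base e f : Eproj e -> Eproj f -> sigma e f
| sigma_refl a : S a -> sigma a a
| sigma_sym a b : sigma a b -> sigma b a
| sigma_trans a b c : sigma a b -> sigma b c -> sigma a c
| sigma_l c a b : S c -> sigma a b -> sigma (mul c a) (mul c b)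
| sigma_r c a b : S c -> sigma a b -> sigma (mul a c) (mul b c).

Definition atomic (H : M -> Prop) : Prop :=
  (forall h, H h -> S h) /\
  (forall e, Eproj e -> H e) /\
  (forall h e, H h -> Eproj e ->
              H (mul h e) /\ star (mul h e) = mul (star h) e) /\
  (forall h k, H h -> H k -> ~ Eproj k -> le (plus k) (star h) ->
              H (mul h k) /\ star (mul h k) = star k) /\
  (forall m, S m -> exists h, H h /\ sigma m h) /\
  (forall h k w, H h -> H k -> H w -> sigma (mul h k) w ->
              star k = star w ->
              exists u, H u /\ sigma u h /\ le (plus k) (star u)).

Fixpoint prodl (l : list M) : M :=
  match l with
  | [] => one
  | [h] => h
  | h :: r => mul h (prodl r)
  end.

Fixpoint canon_chain (l : list M) : Prop :=
  match l with
  | h :: ((k :: _) as r) => lt (star h) (plus k) /\ ~ Eproj k /\ canon_chain r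
  | _ => True
  end.

Definition canonical (H : M -> Prop) (l : list M) : Prop :=
  l <> [] /\ Forall H l /\ canon_chain l.

Definition has_canonical_forms (H : M -> Prop) : Prop :=
  forall a, S a ->
    (exists l, canonical H l /\ prodl l = a) /\
    (forall l l', canonical H l -> canonical H l' ->
        prodl l = a -> prodl l' = a -> l = l').

Definition generates (H : M -> Prop) : Prop :=
  forall a, S a -> exists l, l <> [] /\ Forall H l /\ prodl l = a.

Definition basis (H : M -> Prop) : Prop :=
  atomic H /\ generates H /\ has_canonical_forms H.

Definition proper (H : M -> Prop) : Prop :=
  forall h k, H h -> H k -> ((star h = star k /\ sigma h k) <-> h = k).

Definition proper_basis (H : M -> Prop) : Prop := basis H /\ proper H.

End Gen.

Definition HQ (D : data) (Y : X D -> Prop) (a : Pl D) : Prop :=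
  exists t e, Y e /\ Y (act D t e) /\ a = mulP (injT t) (injX e).

Inductive Ql (D : data) (Y : X D -> Prop) : Pl D -> Prop :=
| Ql_gen a : HQ Y a -> Ql Y a
| Ql_mul a b : Ql Y a -> Ql Y b -> Ql Y (mulP a b).

From Stdlib Require Import List ClassicalEpsilon FunctionalExtensionality PropExtensionality.
Import ListNotations.

(** Words over [T + X] are reduced to T-normal forms by letting each letter act
    on the left of a normal form; this action respects the defining congruence and
    fixes the word of a normal form, so two words are congruent iff their normal
    forms agree, which also makes [*] well defined.  An element of [Q_l(T,X,Y)] is
    a product of blocks [t e] with [e] and [t.e] in [Y]; by (A) the normal form of
    such a product again splits into such blocks, which is its [H^Q]-canonical form
    and shows that [+] and [*] take values in [Y].  Finally the product of the
    [T]-letters of a word is invariant under sigma; together with (B) this yields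
    (H4), (H5) and properness. *)

Section Pl.
Variable D : data.
Hypothesis HTassoc : forall r s t, mulT D (mulT D r s) t = mulT D r (mulT D s t).
Hypothesis HT1l : forall t, mulT D (oneT D) t = t.
Hypothesis HT1r : forall t, mulT D t (oneT D) = t.
Hypothesis HXassoc : forall e f g, meet D (meet D e f) g = meet D e (meet D f g).
Hypothesis HXcomm : forall e f, meet D e f = meet D f e.
Hypothesis HXidem : forall e, meet D e e = e.
Hypothesis HX1 : forall e, meet D (oneX D) e = e.
Hypothesis Hact1 : forall e, act D (oneT D) e = e.
Hypothesis Hactmul : forall s t e, act D (mulT D s t) e = act D s (act D t e).
Hypothesis Hactmono : forall t e f, leX D e f -> leX D (act D t e) (act D t f).

Local Notation mT := (mulT D).
Local Notation o1 := (oneT D).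
Local Notation mX := (meet D).
Local Notation x1 := (oneX D).
Local Notation ac := (act D).
Local Notation EM := excluded_middle_informative.

Lemma meetx1 e : mX e x1 = e.
Proof. rewrite HXcomm; apply HX1. Qed.

Lemma leX_refl e : leX D e e.
Proof. apply HXidem. Qed.

Lemma leX_1 e : leX D e x1.
Proof. apply meetx1. Qed.

Lemma leX_meetl e f : leX D (mX e f) e.
Proof. unfold leX. rewrite HXassoc, (HXcomm f e), <- HXassoc, HXidem; auto. Qed.

Lemma leX_meetr e f : leX D (mX e f) f.
Proof. unfold leX. rewrite HXassoc, HXidem; auto. Qed.

Lemma leX_trans e f g : leX D e f -> leX D f g -> leX D e g.
Proof. unfold leX; intros H1 H2. rewrite <- H1, HXassoc, H2; auto. Qed.

Lemma leX_antisym e f : leX D e f -> leX D f e -> e = f.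
Proof. unfold leX; intros H1 H2. rewrite <- H1, HXcomm; auto. Qed.

Lemma leX_meet2l e x y : leX D x y -> leX D (mX e x) (mX e y).
Proof.
  unfold leX; intros H.
  rewrite HXassoc, <- (HXassoc x e y), (HXcomm x e), HXassoc, <- (HXassoc e e), HXidem, H.
  auto.
Qed.

Lemma leX_meetE e f : leX D e f -> mX f e = e.
Proof. unfold leX; intros H; rewrite HXcomm; auto. Qed.

Lemma leX1_eq e : leX D x1 e -> e = x1.
Proof. unfold leX; intros H. rewrite HX1 in H; auto. Qed.

Lemma act_word_app (u v : word D) x : act_word (u ++ v) x = act_word u (act_word v x).
Proof. apply fold_right_app. Qed.

Lemma act_word_mono (w : word D) x y : leX D x y -> leX D (act_word w x) (act_word w y).
Proof.
  induction w as [|[t|e] w IH]; simpl; intros H;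
    [exact H | apply Hactmono, IH, H | apply leX_meet2l, IH, H].
Qed.

Lemma act_word_cong (u v : word D) : cong u v -> forall x, act_word u x = act_word v x.
Proof.
  induction 1; intros x; simpl; auto.
  - unfold plusw. apply leX_meetE, act_word_mono, leX_1.
  - rewrite Hact1, HX1; auto.
  - rewrite IHcong1; auto.
  - rewrite !act_word_app, IHcong; auto.
Qed.

Lemma plusw_cong (u v : word D) : cong u v -> plusw u = plusw v.
Proof. intros H; apply act_word_cong; auto. Qed.

Lemma cong_app_l (p u v : word D) : cong u v -> cong (p ++ u) (p ++ v).
Proof. intros H. pose proof (cong_ctx p [] H) as H'. rewrite !app_nil_r in H'; auto. Qed.

Lemma cong_app_r (q u v : word D) : cong u v -> cong (u ++ q) (v ++ q).
Proof. apply (cong_ctx []). Qed.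

Lemma cong_app (u u' v v' : word D) : cong u u' -> cong v v' -> cong (u ++ v) (u' ++ v').
Proof. intros H1 H2. eapply cong_trans; [apply cong_app_r, H1 | apply cong_app_l, H2]. Qed.

Lemma cong_cons l (u v : word D) : cong u v -> cong (l :: u) (l :: v).
Proof. apply (cong_app_l [l]). Qed.

Lemma cong_X1 (w : word D) : cong (inr x1 :: w) w.
Proof. apply (cong_app_r w _ _ (cong_plus [])). Qed.

Lemma cong_T1 (w : word D) : cong (inl o1 :: w) w.
Proof. eapply cong_trans; [apply (cong_app_r w _ _ (cong_one D)) | apply cong_X1]. Qed.

Lemma cong_XX e f (w : word D) : cong (inr e :: inr f :: w) (inr (mX e f) :: w).
Proof. apply (cong_app_r w _ _ (cong_X D e f)). Qed.

Lemma cong_TT s t (w : word D) : cong (inl s :: inl t :: w) (inl (mT s t) :: w).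
Proof. apply (cong_app_r w _ _ (cong_T D s t)). Qed.

Lemma cong_absorb e (w : word D) : leX D (plusw w) e -> cong (inr e :: w) w.
Proof.
  intros H.
  eapply cong_trans; [apply cong_cons, cong_sym, (cong_plus w)|].
  eapply cong_trans; [apply cong_XX|].
  rewrite HXcomm, H. apply cong_plus.
Qed.

Definition nform := (T D * list (X D * T D))%type.
Definition nfw (n : nform) : word D := inl (fst n) :: nf_word D (snd n).
Definition plusN (n : nform) := plusw (nfw n).
Definition valid (n : nform) := is_nf_tail D (snd n).
Definition starts_with_proj (n : nform) := fst n = o1 /\ snd n <> [].
Definition head_proj (l : list (X D * T D)) := match l with [] => x1 | (e, _) :: _ => e end.

(* [e n] is congruent to [(e n^+) n] because [n = n^+ n]: the factor is absorbed
   when [n^+ <= e], merged into [e1] when [t0 = 1], and prepended otherwise. *)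
Definition lmulX_prepend e (n : nform) : nform :=
  if EM (mX e (plusN n) = plusN n) then n else (o1, (mX e (plusN n), fst n) :: snd n).
Definition lmulX e (n : nform) : nform :=
  match n with
  | (t0, (e1, t1) :: r) => if EM (t0 = o1) then (o1, (mX e e1, t1) :: r) else lmulX_prepend e n
  | _ => lmulX_prepend e n
  end.
Definition lmul (l : letter D) (n : nform) : nform :=
  match l with inl s => (mT s (fst n), snd n) | inr e => lmulX e n end.
Definition lmulw (w : word D) (n : nform) := fold_right lmul n w.
Definition nf (w : word D) := lmulw w (o1, []).

Lemma lmulX_cases e n :
  (exists e1 t1 r, n = (o1, (e1, t1) :: r) /\ lmulX e n = (o1, (mX e e1, t1) :: r)) \/
  (~ starts_with_proj n /\ mX e (plusN n) = plusN n /\ lmulX e n = n) \/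
  (~ starts_with_proj n /\ mX e (plusN n) <> plusN n /\
     lmulX e n = (o1, (mX e (plusN n), fst n) :: snd n)).
Proof.
  destruct (classic (starts_with_proj n)) as [HA|HA].
  - left. destruct n as [t0 [|[e1 t1] r]]; destruct HA as [H1 H2]; simpl in *; [congruence|].
    subst. exists e1, t1, r. split; auto. simpl. destruct (EM (o1 = o1)); congruence.
  - right.
    assert (E : lmulX e n = lmulX_prepend e n).
    { destruct n as [t0 [|[e1 t1] r]]; simpl; auto.
      destruct (EM (t0 = o1)); auto. exfalso; apply HA; split; simpl; auto; discriminate. }
    rewrite E. unfold lmulX_prepend. destruct (EM _); [left|right]; auto.
Qed.

Lemma lmulX_start e e1 t1 r : lmulX e (o1, (e1, t1) :: r) = (o1, (mX e e1, t1) :: r).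
Proof. simpl. destruct (EM (o1 = o1)); congruence. Qed.

Lemma lmulX_other e n : ~ starts_with_proj n -> lmulX e n = lmulX_prepend e n.
Proof.
  destruct n as [t0 [|[e1 t1] r]]; simpl; auto.
  intros H. destruct (EM (t0 = o1)); auto. exfalso; apply H; split; simpl; auto; discriminate.
Qed.

Lemma plusN_valid n : valid n -> plusN n = ac (fst n) (head_proj (snd n)).
Proof.
  destruct n as [t0 [|[e1 t1] r]]; unfold plusN, plusw; simpl; intros Hv; auto.
  destruct Hv as [_ [_ [[Hle _] _]]]. unfold plusw in Hle; simpl in Hle. rewrite Hle; auto.
Qed.

Lemma valid_lmul l n : valid n -> valid (lmul l n).
Proof.
  intros Hv. destruct l as [s|e]; simpl; [exact Hv|].
  destruct (lmulX_cases e n) as [[e1 [t1 [r [Hn Hf]]]] | [[HB [Hp Hf]] | [HB [Hp Hf]]]];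
    rewrite Hf; auto.
  - subst n. unfold valid in *; simpl in *. destruct Hv as [He1 [Ht [[Hle Hne] Hr]]].
    repeat split; auto.
    + intros E. apply He1, leX1_eq. rewrite <- E. apply leX_meetr.
    + eapply leX_trans; [apply leX_meetr | exact Hle].
    + intros E. apply Hne, leX_antisym; auto. rewrite <- E. apply leX_meetr.
  - destruct n as [t0 l]. unfold valid in *; simpl in *. repeat split; auto.
    + intros E. apply Hp.
      assert (E2 : plusN (t0, l) = x1) by (apply leX1_eq; rewrite <- E; apply leX_meetr).
      rewrite E, E2; reflexivity.
    + intros Hl E. apply HB. split; auto.
    + apply leX_meetr.
Qed.

Lemma valid_lmulw w n : valid n -> valid (lmulw w n).
Proof. induction w; simpl; auto. intros; apply valid_lmul; auto. Qed.

Lemma valid_nf w : valid (nf w).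
Proof. apply valid_lmulw. exact I. Qed.

Lemma plusN_lmul l n : plusN (lmul l n) = act_word [l] (plusN n).
Proof.
  destruct l as [s|e]; simpl.
  - destruct n as [t0 l]. apply Hactmul.
  - destruct (lmulX_cases e n) as [[e1 [t1 [r [Hn Hf]]]] | [[HB [Hp Hf]] | [HB [Hp Hf]]]];
      rewrite Hf; auto.
    + subst n. unfold plusN, plusw; simpl. rewrite !Hact1, HXassoc; auto.
    + destruct n as [t0 l]. unfold plusN at 1, plusw; simpl.
      rewrite Hact1, HXassoc. f_equal. apply HXidem.
Qed.

Lemma plusN_lmulw w n : plusN (lmulw w n) = act_word w (plusN n).
Proof. induction w as [|l w IH]; simpl; auto. rewrite plusN_lmul, IH; auto. Qed.

Lemma lmul_absorb e n : valid n -> leX D (plusN n) e -> lmul (inr e) n = n.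
Proof.
  intros Hv Hle. simpl.
  destruct (lmulX_cases e n) as [[e1 [t1 [r [Hn Hf]]]] | [[HB [Hp Hf]] | [HB [Hp Hf]]]];
    rewrite Hf; auto.
  - subst n. rewrite plusN_valid in Hle; auto. simpl in Hle. rewrite Hact1 in Hle.
    rewrite (leX_meetE _ _ Hle); auto.
  - exfalso. apply Hp, leX_meetE; auto.
Qed.

Lemma lmul_XX e f n : lmul (inr e) (lmul (inr f) n) = lmul (inr (mX e f)) n.
Proof.
  simpl.
  destruct (lmulX_cases f n) as [[e1 [t1 [r [Hn Hf]]]] | [[HB [Hp Hf]] | [HB [Hp Hf]]]];
    rewrite Hf.
  - subst n. rewrite !lmulX_start, HXassoc; auto.
  - rewrite !(lmulX_other _ _ HB). unfold lmulX_prepend. rewrite HXassoc, Hp. auto.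
  - rewrite lmulX_start, (lmulX_other _ _ HB). unfold lmulX_prepend.
    destruct (EM _) as [E|E]; [|rewrite HXassoc; auto].
    exfalso. apply Hp, leX_antisym; [apply leX_meetr|].
    rewrite HXassoc in E. rewrite <- E at 1. apply leX_meetr.
Qed.

Lemma lmul_X1 n : lmul (inr x1) n = n.
Proof.
  simpl.
  destruct (lmulX_cases x1 n) as [[e1 [t1 [r [Hn Hf]]]] | [[HB [Hp Hf]] | [HB [Hp Hf]]]];
    rewrite Hf; auto.
  - subst; rewrite HX1; auto.
  - exfalso; apply Hp, HX1.
Qed.

Lemma lmulw_app u v n : lmulw (u ++ v) n = lmulw u (lmulw v n).
Proof. apply fold_right_app. Qed.

Lemma lmulw_cong u v : cong u v -> forall n, valid n -> lmulw u n = lmulw v n.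
Proof.
  induction 1; intros n Hv; simpl.
  - destruct n; simpl. rewrite HTassoc; auto.
  - apply lmul_XX.
  - apply lmul_absorb; [apply valid_lmulw; auto|].
    rewrite plusN_lmulw. apply act_word_mono, leX_1.
  - change (lmulX x1 n) with (lmul (inr x1) n). rewrite lmul_X1.
    destruct n; simpl; rewrite HT1l; auto.
  - auto.
  - symmetry; auto.
  - rewrite IHcong1; auto.
  - rewrite !lmulw_app, IHcong; auto. apply valid_lmulw; auto.
Qed.

Lemma cong_lmul l n : cong (l :: nfw n) (nfw (lmul l n)).
Proof.
  destruct l as [s|e]; [apply cong_TT|]. simpl.
  destruct (lmulX_cases e n) as [[e1 [t1 [r [Hn Hf]]]] | [[HB [Hp Hf]] | [HB [Hp Hf]]]];
    rewrite Hf.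
  - subst n. unfold nfw; simpl.
    eapply cong_trans; [apply cong_cons, cong_T1|].
    eapply cong_trans; [apply cong_XX | apply cong_sym, cong_T1].
  - apply cong_absorb. unfold leX. rewrite HXcomm. exact Hp.
  - unfold nfw at 2; simpl.
    eapply cong_trans; [|apply cong_sym, cong_T1].
    eapply cong_trans; [|apply cong_XX].
    apply cong_cons, cong_sym, (cong_plus (nfw n)).
Qed.

Lemma cong_nf w : cong w (nfw (nf w)).
Proof.
  induction w as [|l w IH]; [apply cong_sym, (cong_T1 [])|].
  eapply cong_trans; [apply cong_cons, IH | apply cong_lmul].
Qed.

Lemma nf_cong u v : cong u v -> nf u = nf v.
Proof. intros H. apply lmulw_cong; auto. exact I. Qed.

Lemma nf_app (u v : word D) : nf (u ++ v) = lmulw u (nf v).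
Proof. apply lmulw_app. Qed.

Lemma lmulw_tail l : is_nf_tail D l -> lmulw (nf_word D l) (o1, []) = (o1, l).
Proof.
  induction l as [|[e t] r IH]; simpl; auto.
  intros [He [Ht [[Hle Hne] Hr]]]. rewrite IH; auto. simpl. rewrite HT1r.
  destruct (lmulX_cases e (t, r)) as [[e1 [t1 [r' [Hn Hf]]]] | [[HB [Hp Hf]] | [HB [Hp Hf]]]].
  - inversion Hn; subst. exfalso. apply Ht; auto; discriminate.
  - exfalso. apply Hne. unfold leX in Hle. rewrite <- Hle. exact Hp.
  - change (lmulX e (t, r) = (o1, (e, t) :: r)). rewrite Hf. simpl.
    unfold leX, plusN, plusw, nfw in *; simpl in *. rewrite Hle. reflexivity.
Qed.

Lemma nf_nfw n : valid n -> nf (nfw n) = n.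
Proof.
  destruct n as [t0 l]. intros Hv. unfold nf, nfw; simpl.
  rewrite lmulw_tail; auto. simpl. rewrite HT1r; auto.
Qed.


Fixpoint star_tail (l : list (X D * T D)) : X D :=
  match l with
  | [] => x1
  | [(e, t)] => if EM (t = o1) then e else x1
  | _ :: r => star_tail r
  end.

Lemma star_tail_app l e t : star_tail (l ++ [(e, t)]) = if EM (t = o1) then e else x1.
Proof. induction l as [|[a b] [|q l] IH]; simpl in *; auto. Qed.

Lemma star_tail_iff l e :
  ((exists l' e', l = l' ++ [(e', o1)] /\ e = e') \/
   ((forall l' e', l <> l' ++ [(e', o1)]) /\ e = x1)) <-> e = star_tail l.
Proof.
  destruct (classic (exists l' e', l = l' ++ [(e', o1)])) as [[l' [e' ->]]|Hn].
  - rewrite star_tail_app. destruct (EM (o1 = o1)) as [_|]; [|congruence]. split.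
    + intros [[l'' [e'' [E ->]]] | [H _]]; [|exfalso; eapply H; eauto].
      apply app_inj_tail in E. destruct E as [_ E]. congruence.
    + intros ->. left; eauto.
  - assert (E : star_tail l = x1).
    { destruct l as [|q l]; auto.
      destruct (exists_last (l := q :: l) ltac:(discriminate)) as [l' [[e' t] E]].
      rewrite E, star_tail_app. destruct (EM (t = o1)); auto.
      subst. exfalso. apply Hn; eauto. }
    rewrite E. split.
    + intros [[l' [e' [E' _]]] | [_ ->]]; auto. exfalso; apply Hn; eauto.
    + intros ->. right. split; auto. intros l' e' E'. apply Hn; eauto.
Qed.

Lemma cls_eq (u v : word D) : cong u v -> cls u = cls v.
Proof.
  intros H. unfold cls. extensionality w. apply propositional_extensionality.
  split; intros H'; eauto using cong_trans, cong_sym.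
Qed.

Lemma cls_inj (u v : word D) : cls u = cls v -> cong u v.
Proof. intros H. assert (H1 : cls u u) by apply cong_refl. rewrite H in H1. apply cong_sym, H1. Qed.

Lemma cls_nf (u v : word D) : cls u = cls v -> nf u = nf v.
Proof. intros H. apply nf_cong, cls_inj, H. Qed.

Lemma mul_cls (u v : word D) : mulP (cls u) (cls v) = cls (u ++ v).
Proof.
  unfold mulP, cls. extensionality w. apply propositional_extensionality. split.
  - intros [u' [v' [H1 [H2 H3]]]].
    eapply cong_trans; [apply cong_app; eauto | apply cong_sym, H3].
  - intros H. exists u, v. repeat split; auto using cong_refl, cong_sym.
Qed.

Lemma plus_cls (u : word D) : plusP (cls u) = cls [inr (plusw u)].
Proof.
  unfold plusP, cls. extensionality w. apply propositional_extensionality. split.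
  - intros [u' [H1 H2]]. rewrite (plusw_cong _ _ H1). apply cong_sym; auto.
  - intros H. exists u. split; auto using cong_refl, cong_sym.
Qed.

Lemma star_cls (w : word D) : starP (cls w) = injX (star_tail (snd (nf w))).
Proof.
  unfold starP. f_equal.
  assert (Hspec : star_spec (cls w) (star_tail (snd (nf w)))).
  { exists (fst (nf w)), (snd (nf w)). split; [apply valid_nf|].
    split; [apply cls_eq, cong_nf | apply star_tail_iff; auto]. }
  destruct (epsilon_spec (inhabits x1) _ (ex_intro _ _ Hspec)) as [t0 [l [Hv [Hc Hd]]]].
  apply cls_nf in Hc. change (inl t0 :: nf_word D l) with (nfw (t0, l)) in Hc.
  rewrite nf_nfw in Hc; auto. rewrite Hc. apply star_tail_iff, Hd.
Qed.

Lemma nf_X e : nf [inr e] = if EM (e = x1) then (o1, []) else (o1, [(e, o1)]).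
Proof.
  change (nf [inr e]) with (lmulX e (o1, [])).
  unfold lmulX, lmulX_prepend, plusN, plusw; simpl. rewrite Hact1, meetx1.
  destruct (EM (e = x1)), (EM (e = x1)); congruence.
Qed.

Definition block_word (p : T D * X D) : word D := [inl (fst p); inr (snd p)].
Definition blocks_word (ps : list (T D * X D)) : word D := flat_map block_word ps.
Definition block (p : T D * X D) : Pl D := cls (block_word p).

Lemma nf_block t e : nf (block_word (t, e)) = if EM (e = x1) then (t, []) else (t, [(e, o1)]).
Proof.
  change (nf (block_word (t, e))) with (lmul (inl t) (nf [inr e])). rewrite nf_X.
  destruct (EM _); simpl; rewrite HT1r; auto.
Qed.

Lemma injX_inj (e f : X D) : injX e = injX f -> e = f.
Proof.
  intros H. apply cls_nf in H. rewrite !nf_X in H.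
  destruct (EM (e = x1)), (EM (f = x1)); congruence.
Qed.

Lemma star_block (t : T D) (e : X D) : starP (block (t, e)) = injX e.
Proof.
  unfold block. rewrite star_cls, nf_block. destruct (EM _) as [->|]; simpl; auto.
  destruct (EM (o1 = o1)); congruence.
Qed.

Lemma star_injX (e : X D) : starP (injX e) = injX e.
Proof.
  assert (E : injX e = block (o1, e)) by apply cls_eq, cong_sym, cong_T1.
  rewrite E at 1. apply star_block.
Qed.

Lemma injX_mul (e f : X D) : mulP (injX e) (injX f) = injX (mX e f).
Proof. unfold injX. rewrite mul_cls. apply cls_eq, (cong_XX e f []). Qed.

Lemma plus_block (t : T D) (e : X D) : plusP (block (t, e)) = injX (ac t e).
Proof. unfold block. rewrite plus_cls. unfold plusw; simpl. rewrite meetx1; auto. Qed.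

Lemma plus_injX (e : X D) : plusP (injX e) = injX e.
Proof. unfold injX. rewrite plus_cls. unfold plusw; simpl. rewrite meetx1; auto. Qed.

Lemma nf_word_app l e t : nf_word D (l ++ [(e, t)]) = nf_word D l ++ [inr e; inl t].
Proof. induction l as [|[a b] l IH]; simpl; auto. rewrite IH; auto. Qed.

Lemma cong_star_tail_r (n : nform) : cong (nfw n ++ [inr (star_tail (snd n))]) (nfw n).
Proof.
  destruct n as [t0 l]. unfold nfw; simpl.
  destruct (proj2 (star_tail_iff l _) eq_refl) as [[l' [e' [-> ->]]] | [_ ->]].
  - rewrite nf_word_app, <- app_assoc, !app_comm_cons. apply cong_app_l. simpl.
    eapply cong_trans; [apply cong_cons, cong_T1|].
    eapply cong_trans; [apply cong_XX|].
    rewrite HXidem. apply cong_cons, cong_sym, (cong_T1 []).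
  - pose proof (cong_app_l (inl t0 :: nf_word D l) _ _ (cong_X1 [])) as H.
    rewrite app_nil_r in H. exact H.
Qed.

Lemma star_tail_lmul l n : leX D (star_tail (snd (lmul l n))) (star_tail (snd n)).
Proof.
  destruct l as [s|e]; [apply leX_refl|]. simpl.
  destruct (lmulX_cases e n) as [[e1 [t1 [r [Hn Hf]]]] | [[HB [Hp Hf]] | [HB [Hp Hf]]]];
    rewrite Hf.
  - subst n; simpl. destruct r as [|q r]; [destruct (EM _)|]; auto using leX_meetr, leX_refl.
  - apply leX_refl.
  - destruct n as [t0 [|q l]]; simpl; auto using leX_1, leX_refl.
Qed.

Lemma star_tail_lmulw w n : leX D (star_tail (snd (lmulw w n))) (star_tail (snd n)).
Proof.
  induction w as [|l w IH]; simpl; [apply leX_refl|].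
  eapply leX_trans; [apply star_tail_lmul | exact IH].
Qed.

Lemma Pl_star_left_ehresmann :
  star_left_ehresmann_axioms (@isClass D) (@mulP D) (@plusP D) (@starP D).
Proof.
  intros x y [u ->] [v ->]. repeat split.
  - rewrite plus_cls, mul_cls. apply cls_eq, (cong_plus u).
  - rewrite !plus_cls, mul_cls, plus_cls. apply cls_eq. unfold plusw; simpl.
    rewrite meetx1. apply cong_sym, (cong_XX _ _ []).
  - rewrite !plus_cls, !mul_cls. apply cls_eq. simpl.
    eapply cong_trans; [apply (cong_XX _ _ [])|].
    rewrite HXcomm. apply cong_sym, (cong_XX _ _ []).
  - rewrite !plus_cls, !mul_cls, !plus_cls. unfold plusw. rewrite !act_word_app. simpl.
    rewrite meetx1. auto.
  - rewrite star_cls. unfold injX. rewrite mul_cls. apply cls_eq.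
    eapply cong_trans; [apply cong_app_r, cong_nf|].
    eapply cong_trans; [apply cong_star_tail_r | apply cong_sym, cong_nf].
  - rewrite star_cls, star_injX; auto.
  - rewrite !star_cls, !injX_mul, HXcomm; auto.
  - (* the star of [u g] lies below [g], since letters only shrink [star_tail] *)
    rewrite (star_cls v). set (g := star_tail (snd (nf v))).
    assert (E : mulP (cls u) (injX g) = cls (u ++ [inr g])) by apply mul_cls.
    rewrite E, star_cls, injX_mul. f_equal.
    rewrite nf_app, HXcomm. apply leX_meetE.
    eapply leX_trans; [apply star_tail_lmulw|]. rewrite nf_X.
    destruct (EM (g = x1)) as [->|]; simpl.
    + apply leX_refl.
    + destruct (EM (o1 = o1)); [apply leX_refl | congruence].
  - rewrite star_cls, plus_injX; auto.
  - rewrite plus_cls. apply star_injX.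
Qed.

Fixpoint tprod (w : word D) : T D :=
  match w with
  | [] => o1
  | inl t :: w' => mT t (tprod w')
  | inr _ :: w' => tprod w'
  end.

Lemma tprod_app u v : tprod (u ++ v) = mT (tprod u) (tprod v).
Proof. induction u as [|[t|e] u IH]; simpl; auto. rewrite IH; auto. Qed.

Lemma tprod_cong u v : cong u v -> tprod u = tprod v.
Proof. induction 1; simpl; auto; [congruence | rewrite !tprod_app, IHcong; auto]. Qed.

Section Q.
Variable Y : X D -> Prop.
Variable oneY : X D.
Hypothesis HYmeet : forall e f, Y e -> Y f -> Y (meet D e f).
Hypothesis HYone : Y oneY.
Hypothesis HYoneid : forall e, Y e -> meet D oneY e = e.
Hypothesis HA : forall t e f, Y e -> Y f -> leX D e f -> Y (act D t f) -> Y (act D t e).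
Hypothesis HB : forall t, exists g, Y g /\ Y (act D t g).

Local Notation proj := (Eproj (Ql Y) (@plusP D)).
Local Notation sig := (sigma (Ql Y) (@mulP D) (@plusP D)).

Definition Yblock (p : T D * X D) := Y (snd p) /\ Y (ac (fst p) (snd p)).

Lemma HQ_iff a : HQ Y a <-> exists p, Yblock p /\ a = block p.
Proof.
  assert (Hb : forall t e, mulP (injT t) (injX e) = block (t, e)) by (intros; apply mul_cls).
  split.
  - intros [t [e [H1 [H2 ->]]]]. exists (t, e). split; [split|]; auto.
  - intros [[t e] [[H1 H2] ->]]. exists t, e. auto.
Qed.

Lemma HQ_block a : HQ Y a -> exists t e, Yblock (t, e) /\ a = block (t, e).
Proof. intros H. apply HQ_iff in H. destruct H as [[t e] [? ?]]. eauto. Qed.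

Lemma Ql_block p : Yblock p -> Ql Y (block p).
Proof. intros H. apply Ql_gen, HQ_iff. eauto. Qed.

Lemma blocks_word_app ps qs : blocks_word (ps ++ qs) = blocks_word ps ++ blocks_word qs.
Proof. apply flat_map_app. Qed.

Lemma Ql_blocks a :
  Ql Y a -> exists ps, ps <> [] /\ Forall Yblock ps /\ a = cls (blocks_word ps).
Proof.
  induction 1 as [a H|a b _ [ps1 [N1 [F1 ->]]] _ [ps2 [N2 [F2 ->]]]].
  - apply HQ_iff in H. destruct H as [p [Hp ->]].
    exists [p]. repeat split; auto. discriminate.
  - exists (ps1 ++ ps2). repeat split.
    + destruct ps1; [congruence | discriminate].
    + apply Forall_app; auto.
    + rewrite mul_cls, blocks_word_app; auto.
Qed.

Lemma Ql_isClass a : Ql Y a -> isClass a.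
Proof. intros Ha. destruct (Ql_blocks _ Ha) as [ps [_ [_ ->]]]. exists (blocks_word ps); auto. Qed.

Lemma Y_plusw_blocks ps : ps <> [] -> Forall Yblock ps -> Y (plusw (blocks_word ps)).
Proof.
  induction ps as [|[t e] r IH]; intros N F; [congruence|].
  inversion F as [|? ? [H1 H2] F']; subst.
  change (blocks_word ((t, e) :: r)) with ([inl t; inr e] ++ blocks_word r). unfold plusw.
  rewrite act_word_app. simpl. destruct r as [|q r].
  - simpl. rewrite meetx1. auto.
  - assert (HP : Y (plusw (blocks_word (q :: r)))) by (apply IH; auto; discriminate).
    apply (HA t _ e); auto. apply leX_meetl.
Qed.

Lemma Ql_injX y : Y y -> Ql Y (injX y).
Proof.
  intros H. replace (injX y) with (block (o1, y)) by (apply cls_eq, cong_T1).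
  apply Ql_block. split; simpl; auto. rewrite Hact1; auto.
Qed.

Lemma Ql_projections x : proj x <-> exists y, Y y /\ x = injX y.
Proof.
  split.
  - intros [a [Ha ->]]. destruct (Ql_blocks _ Ha) as [ps [N [F ->]]]. rewrite plus_cls.
    exists (plusw (blocks_word ps)). split; auto. apply Y_plusw_blocks; auto.
  - intros [y [Hy ->]]. exists (injX y). split; [apply Ql_injX; auto | rewrite plus_injX; auto].
Qed.

Lemma proj_injX y : Y y -> proj (injX y).
Proof. intros H. apply Ql_projections. eauto. Qed.

Lemma block_proj e : Y e -> proj (block (o1, e)).
Proof.
  intros H. replace (block (o1, e)) with (injX e) by (apply cls_eq, cong_sym, cong_T1).
  apply proj_injX, H.
Qed.

Lemma block_not_proj t e : t <> o1 -> ~ proj (block (t, e)).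
Proof.
  intros H HE. apply Ql_projections in HE. destruct HE as [y [_ E]].
  apply cls_nf in E. rewrite nf_block, nf_X in E.
  destruct (EM _), (EM _); inversion E; auto.
Qed.

(** The [H^Q]-blocks of a normal form [t0 e1 t1 ... en tn] are
    [t0 e1, t1 e2, ..., tn 1]; a trailing [tn 1] with [tn = 1] is dropped, and
    [en] is then the star of the normal form. *)
Fixpoint blocks_of_tail (t0 : T D) (l : list (X D * T D)) : list (T D * X D) :=
  match l with
  | [] => [(t0, x1)]
  | (e, t) :: r =>
      (t0, e) :: match r with
                  | [] => if EM (t = o1) then [] else [(t, x1)]
                  | _ => blocks_of_tail t r
                  end
  end.
Definition blocks_of_nf (n : nform) := blocks_of_tail (fst n) (snd n).

Lemma blocks_of_tail_cons t0 l :
  blocks_of_tail t0 l = (t0, head_proj l) :: tl (blocks_of_tail o1 l).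
Proof. destruct l as [|[e t] [|q r]]; reflexivity. Qed.

Lemma blocks_of_tail_cons2 t0 e t l :
  t <> o1 -> blocks_of_tail t0 ((e, t) :: l) = (t0, e) :: blocks_of_tail t l.
Proof. intros H. destruct l; simpl; auto. destruct (EM (t = o1)); congruence. Qed.

Lemma blocks_of_nf_nonempty n : blocks_of_nf n <> [].
Proof. unfold blocks_of_nf. rewrite blocks_of_tail_cons. discriminate. Qed.

Lemma cong_blocks_of_nf n : cong (blocks_word (blocks_of_nf n)) (nfw n).
Proof.
  destruct n as [t0 l]. unfold blocks_of_nf, nfw; simpl. revert t0.
  induction l as [|[e t] r IH]; intros t0; simpl.
  - apply cong_cons, (cong_X1 []).
  - destruct r as [|q r]; [destruct (EM (t = o1)) as [->|]|]; apply cong_cons, cong_cons;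
      [apply cong_sym, (cong_T1 []) | apply (IH t) | apply IH].
Qed.

Lemma Yblocks_lmul_block p n : Yblock p -> valid n ->
  Forall Yblock (blocks_of_nf n) -> Forall Yblock (blocks_of_nf (lmulw (block_word p) n)).
Proof.
  destruct p as [s g]. intros [Hg Hsg] Hv F.
  assert (Hhd : Yblock (fst n, head_proj (snd n))).
  { unfold blocks_of_nf in F. rewrite blocks_of_tail_cons in F. inversion F; auto. }
  destruct Hhd as [Hh1 Hh2]; simpl in Hh1, Hh2.
  assert (HP : plusN n = ac (fst n) (head_proj (snd n))) by (apply plusN_valid; auto).
  change (lmulw (block_word (s, g)) n) with (lmul (inl s) (lmulX g n)).
  destruct (lmulX_cases g n) as [[e1 [t1 [r [Hn Hf]]]] | [[HBn [Hp Hf]] | [HBn [Hp Hf]]]];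
    rewrite Hf.
  - subst n. unfold blocks_of_nf in *; simpl in *. rewrite HT1r.
    inversion F; subst. constructor; auto. split; simpl.
    + apply HYmeet; auto.
    + apply (HA s _ g); auto using leX_meetl.
  - unfold blocks_of_nf in *; simpl. rewrite blocks_of_tail_cons.
    rewrite blocks_of_tail_cons in F. inversion F; subst.
    constructor; auto. split; simpl; auto. rewrite Hactmul, <- HP.
    apply (HA s _ g); auto.
    + rewrite HP; auto.
    + unfold leX; rewrite HXcomm; auto.
  - unfold blocks_of_nf in *; simpl. rewrite HT1r. rewrite HP in *. constructor.
    + split; simpl; [apply HYmeet; auto|].
      apply (HA s _ g); auto using leX_meetl.
    + destruct n as [t0 [|q l]]; simpl in *; [destruct (EM (t0 = o1))|]; auto.
Qed.

Lemma Yblocks_nf ps : ps <> [] -> Forall Yblock ps ->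
  Forall Yblock (blocks_of_nf (nf (blocks_word ps))).
Proof.
  induction ps as [|p [|q r] IH]; intros N F; [congruence| |]; inversion F; subst.
  - destruct p as [t e]. change (blocks_word [(t, e)]) with (block_word (t, e)).
    rewrite nf_block. unfold blocks_of_nf.
    destruct (EM (e = x1)) as [->|]; simpl; [|destruct (EM (o1 = o1)); [|congruence]];
      constructor; auto.
  - change (blocks_word (p :: q :: r)) with (block_word p ++ blocks_word (q :: r)).
    rewrite nf_app. apply Yblocks_lmul_block; auto; [apply valid_nf | apply IH; auto; discriminate].
Qed.

Lemma Y_star_tail n : valid n -> Forall Yblock (blocks_of_nf n) -> Y (star_tail (snd n)).
Proof.
  destruct n as [t0 l]. unfold valid, blocks_of_nf; simpl. revert t0.
  induction l as [|[e t] r IH]; intros t0 Hv F; simpl in *.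
  - inversion F as [|? ? [H1 H2] _]; auto.
  - destruct Hv as [_ [_ [_ Hr]]]. inversion F as [|? ? [H1 H2] F']; subst; simpl in *.
    destruct r as [|q r]; [|apply (IH t); auto].
    destruct (EM (t = o1)); auto. inversion F' as [|? ? [H3 H4] _]; auto.
Qed.

Lemma Ql_star a : Ql Y a -> exists y, Y y /\ starP a = injX y.
Proof.
  intros Ha. destruct (Ql_blocks _ Ha) as [ps [N [F ->]]]. rewrite star_cls.
  eexists; split; [|reflexivity]. apply Y_star_tail; [apply valid_nf | apply Yblocks_nf; auto].
Qed.

Fixpoint block_chain (ps : list (T D * X D)) : Prop :=
  match ps with
  | (t, e) :: (((t', e') :: _) as r) => (ltX D e (ac t' e') /\ t' <> o1) /\ block_chain r
  | _ => True
  end.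

Lemma block_chain_nf n : valid n -> block_chain (blocks_of_nf n).
Proof.
  destruct n as [t0 l]. unfold valid, blocks_of_nf; simpl. revert t0.
  induction l as [|[e t] r IH]; intros t0 Hv; simpl; auto.
  destruct Hv as [He [Ht [Hlt Hr]]].
  change (plusw (inl t :: nf_word D r)) with (plusN (t, r)) in Hlt.
  rewrite (plusN_valid (t, r) Hr) in Hlt.
  destruct r as [|[e1 t1] r]; [destruct (EM (t = o1)); simpl; auto|].
  split; [split; auto; apply Ht; discriminate | apply (IH t Hr)].
Qed.

(* A chain of blocks is already in normal form: multiplying on the left by
   [t e] with [e < t'.e'] and [t' <> 1] just prepends [(e, t')]. *)
Lemma blocks_of_nf_chain ps : ps <> [] -> block_chain ps -> blocks_of_nf (nf (blocks_word ps)) = ps.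
Proof.
  induction ps as [|[t e] [|[t' e'] r] IH]; intros N C; [congruence| |].
  - change (blocks_word [(t, e)]) with (block_word (t, e)). rewrite nf_block.
    unfold blocks_of_nf. destruct (EM (e = x1)) as [->|]; simpl; auto.
    destruct (EM (o1 = o1)); congruence.
  - destruct C as [[[Hle Hne] Ht'] C].
    assert (IH' : blocks_of_nf (nf (blocks_word ((t', e') :: r))) = (t', e') :: r)
      by (apply IH; auto; discriminate).
    change (blocks_word ((t, e) :: (t', e') :: r))
      with (block_word (t, e) ++ blocks_word ((t', e') :: r)).
    rewrite nf_app.
    assert (Hv : valid (nf (blocks_word ((t', e') :: r)))) by apply valid_nf.
    revert IH' Hv. generalize (nf (blocks_word ((t', e') :: r))). intros [t0 l] IH' Hv.
    change (lmulw (block_word (t, e)) (t0, l)) with (lmul (inl t) (lmulX e (t0, l))).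
    unfold blocks_of_nf in IH'. rewrite blocks_of_tail_cons in IH'. injection IH' as -> H2 H3.
    assert (HP : plusN (t', l) = ac t' e') by (rewrite plusN_valid; simpl; auto; rewrite H2; auto).
    unfold leX in Hle.
    destruct (lmulX_cases e (t', l)) as [[e1 [t1 [r1 [Hn Hf]]]] | [[HBn [Hp Hf]] | [HBn [Hp Hf]]]].
    + inversion Hn. congruence.
    + exfalso. apply Hne. rewrite <- HP in *. rewrite <- Hp, Hle. auto.
    + rewrite Hf. unfold lmul, blocks_of_nf; cbn [fst snd]. rewrite HT1r, HP, Hle.
      rewrite blocks_of_tail_cons2, blocks_of_tail_cons, H2, H3 by auto. reflexivity.
Qed.

Lemma prodl_blocks (one : Pl D) ps :
  ps <> [] -> prodl (@mulP D) one (map block ps) = cls (blocks_word ps).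
Proof.
  induction ps as [|p [|q r] IH]; intros N; [congruence| |].
  - reflexivity.
  - change (prodl (@mulP D) one (map block (p :: q :: r)))
      with (mulP (block p) (prodl (@mulP D) one (map block (q :: r)))).
    rewrite IH by discriminate. unfold block. rewrite mul_cls. reflexivity.
Qed.

Lemma lt_injX a b : lt (@mulP D) (injX a) (injX b) <-> ltX D a b.
Proof.
  unfold lt, le, ltX, leX. rewrite injX_mul. split.
  - intros [H1 H2]. split; [apply injX_inj; auto | intros E; apply H2; subst; auto].
  - intros [H1 H2]. split; [rewrite H1; auto | intros E; apply H2, injX_inj; auto].
Qed.

Lemma block_chain_canon ps : Forall Yblock ps ->
  (block_chain ps <-> canon_chain (Ql Y) (@mulP D) (@plusP D) (@starP D) (map block ps)).
Proof.
  induction ps as [|[t e] [|[t' e'] r] IH]; intros F; simpl; [tauto..|].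
  inversion F as [|? ? _ F']; subst. inversion F' as [|? ? [Y1 _] _]; subst.
  specialize (IH F'). simpl in IH. rewrite <- IH, star_block, plus_block, lt_injX.
  split.
  - intros [[H3 H4] H5]. split; [exact H3 | split; [apply block_not_proj, H4 | exact H5]].
  - intros [H3 [H4 H5]].
    split; [split; [exact H3 | intros ->; apply H4, block_proj, Y1] | exact H5].
Qed.

Lemma HQ_map_blocks ps : Forall Yblock ps -> Forall (HQ Y) (map block ps).
Proof. induction 1; simpl; constructor; auto. apply HQ_iff; eauto. Qed.

Lemma HQ_list_blocks l : Forall (HQ Y) l -> exists ps, Forall Yblock ps /\ l = map block ps.
Proof.
  induction 1 as [|a l Ha _ [ps [F ->]]]; [exists []; auto|].
  apply HQ_iff in Ha. destruct Ha as [p [Hp ->]]. exists (p :: ps); auto.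
Qed.

Lemma block_mul_injX t e g : mulP (block (t, e)) (injX g) = block (t, mX e g).
Proof. unfold block, injX. rewrite mul_cls. apply cls_eq, cong_cons, (cong_XX _ _ []). Qed.

Lemma block_mul_absorb t e s f :
  leX D (ac s f) e -> mulP (block (t, e)) (block (s, f)) = block (mT t s, f).
Proof.
  intros H. unfold block. rewrite mul_cls. apply cls_eq. simpl.
  eapply cong_trans;
    [apply cong_cons, (cong_absorb e [inl s; inr f]) | apply (cong_TT _ _ [inr f])].
  unfold plusw; simpl. rewrite meetx1. exact H.
Qed.

Lemma sigma_blocks_same_T t e e' :
  Yblock (t, e) -> Yblock (t, e') -> sig (block (t, e)) (block (t, e')).
Proof.
  assert (Hmeet : forall a b,
            Yblock (t, a) -> Yblock (t, b) -> sig (block (t, a)) (block (t, mX a b))).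
  { intros a b [Ha1 Ha2] [Hb1 Hb2]. simpl in *.
    rewrite <- (HXidem a) at 1. rewrite <- !block_mul_injX.
    apply sigma_l; [apply Ql_block; split; auto|].
    apply sigma_base; apply proj_injX; auto. }
  intros H1 H2. eapply sigma_trans; [apply (Hmeet e e'); auto|].
  rewrite HXcomm. apply sigma_sym, Hmeet; auto.
Qed.

(* [tprod] is a homomorphism killing the projections, hence constant on sigma-classes. *)
Lemma sigma_tprod a b : sig a b -> exists u v, a = cls u /\ b = cls v /\ tprod u = tprod v.
Proof.
  induction 1 as [e f He Hf|a Ha|a b _ IH|a b c _ IH1 _ IH2|c a b Hc _ IH|c a b Hc _ IH].
  - apply Ql_projections in He, Hf. destruct He as [y1 [_ ->]]. destruct Hf as [y2 [_ ->]].
    exists [inr y1], [inr y2]. auto.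
  - destruct (Ql_blocks _ Ha) as [ps [_ [_ ->]]]. eauto.
  - destruct IH as [u [v [? [? ?]]]]. exists v, u. auto.
  - destruct IH1 as [u [v [-> [-> E1]]]]. destruct IH2 as [v' [w [E2 [-> E3]]]].
    exists u, w. repeat split; auto. apply cls_inj, tprod_cong in E2. congruence.
  - destruct (Ql_blocks _ Hc) as [ps [_ [_ ->]]]. destruct IH as [u [v [-> [-> E]]]].
    exists (blocks_word ps ++ u), (blocks_word ps ++ v). rewrite !mul_cls, !tprod_app, E. auto.
  - destruct (Ql_blocks _ Hc) as [ps [_ [_ ->]]]. destruct IH as [u [v [-> [-> E]]]].
    exists (u ++ blocks_word ps), (v ++ blocks_word ps). rewrite !mul_cls, !tprod_app, E. auto.
Qed.

Lemma sigma_block_T t e s f : sig (block (t, e)) (block (s, f)) -> t = s.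
Proof.
  intros H. apply sigma_tprod in H. destruct H as [u [v [E1 [E2 E3]]]].
  apply cls_inj, tprod_cong in E1. apply cls_inj, tprod_cong in E2.
  simpl in *. rewrite !HT1r in *. congruence.
Qed.

(* (B) supplies [g] with [ts.g] in [Y]; shrinking [f] to [f g] and then [e] to
   [s.(f g)] stays inside the sigma-class and makes the two blocks collapse. *)
Lemma sigma_block_mul t e s f : Yblock (t, e) -> Yblock (s, f) ->
  exists g, Yblock (mT t s, g) /\ sig (mulP (block (t, e)) (block (s, f))) (block (mT t s, g)).
Proof.
  intros [Y1 Y2] [Y3 Y4]. simpl in *.
  destruct (HB (mT t s)) as [g [Hg Htsg]].
  assert (Yfg : Y (mX f g)) by (apply HYmeet; auto).
  assert (Ysfg : Y (ac s (mX f g))) by (apply (HA s _ f); auto using leX_meetl).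
  assert (Ytsfg : Y (ac (mT t s) (mX f g))) by (apply (HA _ _ g); auto using leX_meetr).
  exists (mX f g). split; [split; auto|].
  rewrite <- (block_mul_absorb t (ac s (mX f g)) s (mX f g)) by apply leX_refl.
  eapply sigma_trans.
  - apply sigma_l; [apply Ql_block; split; auto|].
    apply (sigma_blocks_same_T s f (mX f g)); split; auto.
  - apply sigma_r; [apply Ql_block; split; auto|].
    apply sigma_blocks_same_T; split; simpl; auto. rewrite <- Hactmul; auto.
Qed.

Lemma Ql_closed_ops : closed_ops (Ql Y) (@mulP D) (@plusP D) (@starP D).
Proof.
  split; [|split].
  - apply Ql_mul.
  - intros a Ha. destruct (Ql_blocks _ Ha) as [ps [N [F ->]]]. rewrite plus_cls.
    apply Ql_injX, Y_plusw_blocks; auto.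
  - intros a Ha. destruct (Ql_star _ Ha) as [y [Hy ->]]. apply Ql_injX, Hy.
Qed.

Lemma Ql_monoid : is_monoid_with_id (Ql Y) (@mulP D) (injX oneY).
Proof.
  split; [apply Ql_injX, HYone|]. split.
  - intros a Ha. destruct (Ql_blocks _ Ha) as [ps [N [F ->]]]. unfold injX. rewrite !mul_cls. split.
    + apply cls_eq, cong_absorb. unfold leX. rewrite HXcomm, HYoneid; auto.
      apply Y_plusw_blocks; auto.
    + (* the last block [t e] absorbs [oneY] on the right since [e] lies in [Y] *)
      apply cls_eq. destruct (exists_last N) as [ps0 [[t e] ->]].
      apply Forall_app in F. destruct F as [_ F]. inversion F as [|? ? [H1 H2] _]; subst.
      rewrite blocks_word_app, <- app_assoc. apply cong_app_l. simpl.
      apply cong_cons. eapply cong_trans; [apply (cong_XX _ _ [])|].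
      rewrite HXcomm, HYoneid; auto. apply cong_refl.
  - intros a b c Ha Hb Hc.
    destruct (Ql_isClass _ Ha) as [u ->], (Ql_isClass _ Hb) as [v ->], (Ql_isClass _ Hc) as [w ->].
    rewrite !mul_cls, app_assoc; auto.
Qed.

Lemma Ql_star_left_ehresmann : star_left_ehresmann_axioms (Ql Y) (@mulP D) (@plusP D) (@starP D).
Proof. intros x y Hx Hy. apply Pl_star_left_ehresmann; apply Ql_isClass; auto. Qed.

Lemma Ql_E_plus_eq_star : E_plus_eq_star (Ql Y) (@plusP D) (@starP D).
Proof.
  intros e. split.
  - intros [a [Ha ->]]. destruct (Ql_blocks _ Ha) as [ps [N [F ->]]]. rewrite plus_cls.
    exists (injX (plusw (blocks_word ps))).
    split; [apply Ql_injX, Y_plusw_blocks; auto | rewrite star_injX; auto].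
  - intros [a [Ha ->]]. destruct (Ql_star _ Ha) as [y [Hy ->]].
    exists (injX y). split; [apply Ql_injX; auto | rewrite plus_injX; auto].
Qed.

Lemma HQ_proj e : proj e -> HQ Y e.
Proof.
  intros He. apply Ql_projections in He. destruct He as [y [Hy ->]]. apply HQ_iff.
  exists (o1, y). split; [split; simpl; auto; rewrite Hact1; auto|].
  apply cls_eq, cong_sym, cong_T1.
Qed.

Lemma HQ_mul_proj h e : HQ Y h -> proj e ->
  HQ Y (mulP h e) /\ starP (mulP h e) = mulP (starP h) e.
Proof.
  intros Hh He. apply HQ_block in Hh. destruct Hh as [t [f [[Y1 Y2] ->]]].
  apply Ql_projections in He. destruct He as [g [Hg ->]].
  rewrite block_mul_injX, !star_block, injX_mul. split; auto.
  apply HQ_iff. exists (t, mX f g). split; auto. split; simpl; [apply HYmeet; auto|].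
  apply (HA t _ f); auto using leX_meetl.
Qed.

Lemma HQ_mul_HQ h k : HQ Y h -> HQ Y k -> le (@mulP D) (plusP k) (starP h) ->
  HQ Y (mulP h k) /\ starP (mulP h k) = starP k.
Proof.
  intros Hh Hk Hle. apply HQ_block in Hh. destruct Hh as [t [e [[Y1 Y2] ->]]].
  apply HQ_block in Hk. destruct Hk as [s [f [[Y3 Y4] ->]]]. simpl in *.
  unfold le in Hle. rewrite plus_block, star_block, injX_mul in Hle. apply injX_inj in Hle.
  rewrite block_mul_absorb, !star_block by exact Hle. split; auto.
  apply HQ_iff. exists (mT t s, f). split; auto. split; simpl; auto.
  rewrite Hactmul. apply (HA t _ e); auto.
Qed.

Lemma HQ_sigma_cover m : Ql Y m -> exists h, HQ Y h /\ sig m h.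
Proof.
  induction 1 as [a Ha|a b Ha [h1 [Hh1 S1]] Hb [h2 [Hh2 S2]]].
  - exists a. split; auto. apply sigma_refl, Ql_gen, Ha.
  - apply HQ_block in Hh1. destruct Hh1 as [t [e [Hte ->]]].
    apply HQ_block in Hh2. destruct Hh2 as [s [f [Hsf ->]]].
    destruct (sigma_block_mul _ _ _ _ Hte Hsf) as [g [Hg Sg]].
    exists (block (mT t s, g)). split; [apply HQ_iff; eauto|].
    eapply sigma_trans; [apply sigma_r; [exact Hb | exact S1]|].
    eapply sigma_trans; [apply sigma_l; [apply Ql_block, Hte | exact S2] | exact Sg].
Qed.

Lemma HQ_sigma_left_factor h k w :
  HQ Y h -> HQ Y k -> HQ Y w -> sig (mulP h k) w -> starP k = starP w ->
  exists u, HQ Y u /\ sig u h /\ le (@mulP D) (plusP k) (starP u).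
Proof.
  intros Hh Hk Hw Hs Hst.
  apply HQ_block in Hh. destruct Hh as [t [e [[Y1 Y2] ->]]].
  apply HQ_block in Hk. destruct Hk as [s [f [[Y3 Y4] ->]]].
  apply HQ_block in Hw. destruct Hw as [r [g [[Y5 Y6] ->]]]. simpl in *.
  rewrite !star_block in Hst. apply injX_inj in Hst. subst g.
  assert (Ers : r = mT t s).
  { apply sigma_tprod in Hs. destruct Hs as [u [v [E1 [E2 E3]]]].
    unfold block in E1, E2. rewrite mul_cls in E1.
    apply cls_inj, tprod_cong in E1. apply cls_inj, tprod_cong in E2. simpl in E1, E2.
    rewrite !HT1r in *. congruence. }
  subst r. rewrite Hactmul in Y6.
  exists (block (t, ac s f)). split; [|split].
  - apply HQ_iff. exists (t, ac s f). split; auto. split; auto.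
  - apply sigma_blocks_same_T; split; auto.
  - unfold le. rewrite plus_block, star_block, injX_mul, HXidem. auto.
Qed.

Lemma HQ_atomic : atomic (Ql Y) (@mulP D) (@plusP D) (@starP D) (HQ Y).
Proof.
  split; [apply Ql_gen|]. split; [apply HQ_proj|]. split; [apply HQ_mul_proj|].
  split; [intros h k Hh Hk _; apply HQ_mul_HQ; auto|].
  split; [apply HQ_sigma_cover | apply HQ_sigma_left_factor].
Qed.

Lemma HQ_generates : generates (Ql Y) (@mulP D) (injX oneY) (HQ Y).
Proof.
  intros a Ha. destruct (Ql_blocks _ Ha) as [ps [N [F ->]]].
  exists (map block ps). split; [|split].
  - destruct ps; simpl; congruence.
  - apply HQ_map_blocks, F.
  - apply prodl_blocks, N.
Qed.

(* Canonical forms are exactly the block decompositions of normal forms. *)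
Lemma HQ_canonical_forms :
  has_canonical_forms (Ql Y) (@mulP D) (injX oneY) (@plusP D) (@starP D) (HQ Y).
Proof.
  intros a Ha. destruct (Ql_blocks _ Ha) as [ps [N [F ->]]]. split.
  - set (n := nf (blocks_word ps)).
    assert (Fn : Forall Yblock (blocks_of_nf n)) by (apply Yblocks_nf; auto).
    exists (map block (blocks_of_nf n)). split; [split; [|split]|].
    + destruct (blocks_of_nf n) eqn:E; [|discriminate].
      exfalso; eapply blocks_of_nf_nonempty; eauto.
    + apply HQ_map_blocks, Fn.
    + apply block_chain_canon, block_chain_nf, valid_nf; auto.
    + rewrite prodl_blocks by apply blocks_of_nf_nonempty.
      apply cls_eq. eapply cong_trans; [apply cong_blocks_of_nf | apply cong_sym, cong_nf].
  - intros l l' [N1 [F1 C1]] [N2 [F2 C2]] E1 E2.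
    destruct (HQ_list_blocks _ F1) as [ps1 [G1 ->]].
    destruct (HQ_list_blocks _ F2) as [ps2 [G2 ->]].
    apply block_chain_canon in C1, C2; auto.
    assert (P1 : ps1 <> []) by (intros ->; apply N1; auto).
    assert (P2 : ps2 <> []) by (intros ->; apply N2; auto).
    rewrite prodl_blocks in E1, E2 by auto. rewrite <- E2 in E1. apply cls_nf in E1.
    rewrite <- (blocks_of_nf_chain _ P1 C1), <- (blocks_of_nf_chain _ P2 C2), E1. reflexivity.
Qed.

Lemma HQ_proper : proper (Ql Y) (@mulP D) (@plusP D) (@starP D) (HQ Y).
Proof.
  intros h k Hh Hk.
  apply HQ_block in Hh. destruct Hh as [t [e [Hte ->]]].
  apply HQ_block in Hk. destruct Hk as [s [f [_ ->]]]. split.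
  - intros [Hst Hs]. rewrite !star_block in Hst. apply injX_inj in Hst. subst f.
    apply sigma_block_T in Hs. subst; auto.
  - intros E. rewrite E. split; auto. apply sigma_refl. rewrite <- E. apply Ql_block, Hte.
Qed.

Lemma HQ_proper_basis :
  proper_basis (Ql Y) (@mulP D) (injX oneY) (@plusP D) (@starP D) (HQ Y).
Proof.
  split; [split; [|split]|].
  - apply HQ_atomic.
  - apply HQ_generates.
  - apply HQ_canonical_forms.
  - apply HQ_proper.
Qed.

End Q.
End Pl.

Theorem mainTheorem18 (D : data) (Y : X D -> Prop) (oneY : X D)
  (HTassoc : forall r s t, mulT D (mulT D r s) t = mulT D r (mulT D s t))
  (HT1l : forall t, mulT D (oneT D) t = t)
  (HT1r : forall t, mulT D t (oneT D) = t)
  (HXassoc : forall e f g, meet D (meet D e f) g = meet D e (meet D f g))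
  (HXcomm : forall e f, meet D e f = meet D f e)
  (HXidem : forall e, meet D e e = e)
  (HX1 : forall e, meet D (oneX D) e = e)
  (Hact1 : forall e, act D (oneT D) e = e)
  (Hactmul : forall s t e, act D (mulT D s t) e = act D s (act D t e))
  (Hactmono : forall t e f, @leX D e f -> @leX D (act D t e) (act D t f))
  (HYmeet : forall e f, Y e -> Y f -> Y (meet D e f))
  (HYone : Y oneY)
  (HYoneid : forall e, Y e -> meet D oneY e = e)
  (HA : forall t e f, Y e -> Y f -> @leX D e f -> Y (act D t f) -> Y (act D t e))
  (HB : forall t, exists g, Y g /\ Y (act D t g)) :
  let Q := Ql Y in
  let mul := @mulP D in
  let plus := @plusP D in
  let star := @starP D in
  let oneQ := @injX D oneY in
  (forall a, Q a -> isClass a) /\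
  closed_ops Q mul plus star /\
  is_monoid_with_id Q mul oneQ /\
  star_left_ehresmann_axioms Q mul plus star /\
  E_plus_eq_star Q plus star /\
  (forall e, Eproj Q plus e <-> exists y, Y y /\ e = @injX D y) /\
  proper_basis Q mul oneQ plus star (HQ Y).
Proof.
  intros Q mul plus star oneQ.
  split; [|split; [|split; [|split; [|split; [|split]]]]].
  - apply Ql_isClass; assumption.
  - apply Ql_closed_ops; assumption.
  - apply Ql_monoid; assumption.
  - apply Ql_star_left_ehresmann; assumption.
  - apply Ql_E_plus_eq_star; assumption.
  - apply Ql_projections; assumption.
  - apply HQ_proper_basis; assumption.
Qed.
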